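(* Let $\Delta>0$, $h>0$, $N\in\mathbb{N}$, $\gamma>0$, $\sigma^2>0$ and real numbers $\eta_1,\dots,\eta_N$ be given. Let $u:\mathbb{R}\to\mathbb{R}$ be a known deterministic causal input ($u(t)=0$ for $t<0$). Let $g$ be a zero-mean Gaussian process on $[0,\infty)$ with covariance $\mathbb{E}\{g(t)g(s)\}=k(t,s)/\gamma$, and let $v(\Delta),\dots,v(N\Delta)$ be i.i.d. $\mathcal{N}(0,\sigma^2)$ random variables independent of $g$. Set $z(i\Delta)=(g*u)(i\Delta)+v(i\Delta)$, where $(g*u)(t)=\int_0^\infty g(\tau)u(t-\tau)\,\mathrm{d}\tau$, and suppose the observed data is the event $\mathcal{Y}_{1:N}=\{z(i\Delta)\in[\eta_i,\eta_i+h),\ i=1,\dots,N\}$. Let $\{t_i\}_{i=1}^{N+M}$ be finitely many real numbers with $t_i=i\Delta$ for $i=1,\dots,N$ and $t_{N+1},\dots,t_{N+M}$ arbitrary, and define $\mathbf{x}=[(g*u)(t_1),\dots,(g*u)(t_{N+M})]^\top$; assume the (Gaussian) covariance matrix of $\mathbf{x}$ is nonsingular. Let $\breve{g}$ be a minimizer over $g\in\mathcal{G}$ of $$-2\sum_{i=1}^{N}\log\left[\int_{\eta_i}^{\eta_i+h}\exp\Big(-\tfrac{1}{2\sigma^2}\big[z_i-(g*u)(i\Delta)\big]^2\Big)\mathrm{d}z_i\right]+\gamma\|g\|_{\mathcal{G}}^2 .$$ Then the maximum a posteriori (MAP) estimate of $\mathbf{x}$ given $\mathcal{Y}_{1:N}$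 is $\hat{\mathbf{x}}=[(\breve g*u)(t_1),\dots,(\breve g*u)(t_{N+M})]^\top$.
   Context: $k:\mathbb{R}_+\times\mathbb{R}_+\to\mathbb{R}$ is a positive-definite kernel and $\mathcal{G}$ is the reproducing kernel Hilbert space (RKHS) it induces, with norm $\|\cdot\|_{\mathcal{G}}$. It is assumed that $u$ and $\mathcal{G}$ are such that each evaluation $g\mapsto (g*u)(t)$ (for the relevant $t$) is a bounded linear functional on $\mathcal{G}$. The kernel matrix $\mathbf{K}\in\mathbb{R}^{N\times N}$ has entries $\mathbf{K}_{ij}=\int_0^\infty\int_0^\infty u(i\Delta-\xi)u(j\Delta-\tau)k(\xi,\tau)\,\mathrm{d}\tau\,\mathrm{d}\xi$ and is assumed nonsingular. *)

From HB Require Import structures.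
From mathcomp Require Import all_boot all_order all_algebra.
From mathcomp Require Import all_classical all_reals all_analysis.
Set Implicit Arguments. Unset Strict Implicit. Unset Printing Implicit Defensive.
Import Order.TTheory GRing.Theory Num.Theory.
Import numFieldNormedType.Exports.
Local Open Scope classical_set_scope.
Local Open Scope ring_scope.

Section Defs.
Variable R : realType.
Local Notation leb := (@lebesgue_measure R).

Definition pd_kernel (k : R -> R -> R) : Prop :=
  (forall s t, 0 <= s -> 0 <= t -> k s t = k t s) /\
  (forall (n : nat) (a s : 'I_n -> R), (forall i, 0 <= s i) ->
     0 <= \sum_(i < n) \sum_(j < n) a i * a j * k (s i) (s j)).

(* the section k(., t), functions on R_+ being extended by 0 to R *)
Definition ksec (k : R -> R -> R) (t : R) : R -> R :=
  fun s => if 0 <= s then k s t else 0.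

(* These axioms characterize the RKHS of k uniquely. *)
Definition is_RKHS (k : R -> R -> R) (G : set (R -> R))
    (ip : (R -> R) -> (R -> R) -> R) : Prop :=
      G (fun _ => 0) /\
      (forall f g, G f -> G g -> G (f \+ g)) /\
      (forall (a : R) f, G f -> G (fun s => a * f s)) /\
      (forall f, G f -> forall s, s < 0 -> f s = 0) /\
      (forall f g, G f -> G g -> ip f g = ip g f) /\
      (forall f g h, G f -> G g -> G h -> ip (f \+ g) h = ip f h + ip g h) /\
      (forall (a : R) f g, G f -> G g -> ip (fun s => a * f s) g = a * ip f g) /\
      (forall f, G f -> 0 <= ip f f) /\
      (forall f, G f -> ip f f = 0 -> f = (fun _ => 0)) /\
      (forall fn : nat -> (R -> R), (forall n, G (fn n)) ->
         (forall e : R, 0 < e -> exists N : nat, forall m n, (N <= m)%N -> (N <= n)%N ->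
            Num.sqrt (ip (fn m \- fn n) (fn m \- fn n)) < e) ->
         exists f, G f /\
           (fun n => Num.sqrt (ip (fn n \- f) (fn n \- f))) @ \oo --> (0 : R)) /\
      (forall t, 0 <= t -> G (ksec k t) /\ forall f, G f -> ip f (ksec k t) = f t).

Definition convol (g u : R -> R) (t : R) : R :=
  (\int[leb]_(tau in `[0, +oo[) (g tau * u (t - tau)))%R.

Definition kentry (k : R -> R -> R) (u : R -> R) (a b : R) : R :=
  (\int[leb]_(xi in `[0, +oo[)
     (\int[leb]_(tau in `[0, +oo[) (u (a - xi) * u (b - tau) * k xi tau)))%R.

Definition gauss_int (s2 m eta h : R) : R :=
  (\int[leb]_(z in `[eta, eta + h[) (expR (- ((z - m) ^+ 2) / (2 * s2))))%R.

Definition crit (N : nat) (Delta h gamma s2 : R) (eta : 'I_N -> R) (u : R -> R)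
    (ip : (R -> R) -> (R -> R) -> R) (g : R -> R) : R :=
  - 2 * (\sum_(i < N) ln (gauss_int s2 (convol g u (i.+1%:R * Delta)) (eta i) h))
  + gamma * ip g g.

(* covariance matrix of x = [(g*u)(t_1); ...; (g*u)(t_n)] when g is a zero-mean
   Gaussian process with covariance k/gamma *)
Definition covx (n : nat) (gamma : R) (k : R -> R -> R) (u : R -> R) (t : 'I_n -> R)
    : 'M[R]_n :=
  gamma^-1 *: \matrix_(i, j) kentry k u (t i) (t j).

Definition gauss_density (n : nat) (S : 'M[R]_n) (x : 'cV[R]_n) : R :=
  (Num.sqrt (2 * pi)) ^- n / Num.sqrt (\det S)
  * expR (- (x^T *m invmx S *m x) 0 0 / 2).

(* likelihood P(Y_{1:N} | x): z_i = x_i + v_i, v_i iid N(0, s2), z_i in [eta_i, eta_i + h) *)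
Definition likelihood (N M : nat) (s2 h : R) (eta : 'I_N -> R) (x : 'cV[R]_(N + M)) : R :=
  \prod_(i < N) ((Num.sqrt (2 * pi * s2))^-1 * gauss_int s2 (x (lshift M i) 0) (eta i) h).

(* posterior density of x given Y_{1:N}, up to the positive constant 1 / P(Y_{1:N})
   (Bayes' rule: p(x | Y) = P(Y | x) p(x) / P(Y)) *)
Definition posterior (N M : nat) (gamma s2 h : R) (eta : 'I_N -> R) (k : R -> R -> R)
    (u : R -> R) (t : 'I_(N + M) -> R) (x : 'cV[R]_(N + M)) : R :=
  @likelihood N M s2 h eta x * gauss_density (covx gamma k u t) x.

Definition is_MAP (n : nat) (post : 'cV[R]_n -> R) (xhat : 'cV[R]_n) : Prop :=
  forall x, post x <= post xhat.

End Defs.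

From HB Require Import structures.
From mathcomp Require Import all_boot all_order all_algebra.
From mathcomp Require Import all_classical all_reals all_analysis.
From mathcomp Require Import ring lra.
Import Order.TTheory GRing.Theory Num.Theory.
Import numFieldNormedType.Exports.
Local Open Scope classical_set_scope.
Local Open Scope ring_scope.
Set Implicit Arguments. Unset Strict Implicit. Unset Printing Implicit Defensive.

(* Each functional L_i : g |-> (g * u)(t_i) is bounded on the RKHS G, so by the
   Riesz representation theorem L_i g = <g, r_i> for some r_i in G; the reproducing
   property identifies the Gram matrix K of the r_i with gamma times the prior
   covariance of x = (L_i g)_i.  By Bayes' rule the posterior density of x is, up
   to a positive factor, exp(-J(x)/2) with J(x) = -2 log P(Y | x) + gamma x^T K^-1 x.
   Minimal-norm interpolation links J to the criterion: for every g,
   gamma x^T K^-1 x <= gamma <g, g> when x is the data of g, with equality for the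
   interpolant of x.  Hence J(data of gb) <= crit(gb) <= crit(interpolant x) = J(x). *)

Record inner_product_space (R : realType) (G : set (R -> R))
    (ip : (R -> R) -> (R -> R) -> R) : Prop := InnerProductSpace {
  ips_zero : G (fun _ => 0);
  ips_add : forall f g, G f -> G g -> G (f \+ g);
  ips_scale : forall (a : R) f, G f -> G (fun s => a * f s);
  ip_sym : forall f g, G f -> G g -> ip f g = ip g f;
  ip_addl : forall f g h, G f -> G g -> G h -> ip (f \+ g) h = ip f h + ip g h;
  ip_scalel : forall (a : R) f g, G f -> G g -> ip (fun s => a * f s) g = a * ip f g;
  ip_ge0 : forall f, G f -> 0 <= ip f f;
  ip_eq0 : forall f, G f -> ip f f = 0 -> f = (fun _ => 0) }.

Definition ips_complete (R : realType) (G : set (R -> R))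
    (ip : (R -> R) -> (R -> R) -> R) : Prop :=
  forall fn : nat -> (R -> R), (forall n, G (fn n)) ->
    (forall e : R, 0 < e -> exists N : nat, forall m n, (N <= m)%N -> (N <= n)%N ->
       Num.sqrt (ip (fn m \- fn n) (fn m \- fn n)) < e) ->
    exists f, G f /\ (fun n => Num.sqrt (ip (fn n \- f) (fn n \- f))) @ \oo --> (0 : R).

Section RKHSAxioms.
Variables (R : realType) (k : R -> R -> R) (G : set (R -> R)).
Variable (ip : (R -> R) -> (R -> R) -> R).
Hypothesis HR : is_RKHS k G ip.

Lemma RKHS_inner_product : inner_product_space G ip.
Proof. by case: HR => [? [? [? [_ [? [? [? [? [? _]]]]]]]]]; split. Qed.

Lemma RKHS_complete : ips_complete G ip.
Proof. by case: HR => [_ [_ [_ [_ [_ [_ [_ [_ [_ [? _]]]]]]]]]]. Qed.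

Lemma RKHS_reproducing t : 0 <= t ->
  G (ksec k t) /\ forall f, G f -> ip f (ksec k t) = f t.
Proof. by case: HR => [_ [_ [_ [_ [_ [_ [_ [_ [_ [_ rep]]]]]]]]]]; exact: rep. Qed.

End RKHSAxioms.

Section InnerProduct.
Variables (R : realType) (G : set (R -> R)) (ip : (R -> R) -> (R -> R) -> R).
Hypothesis HI : inner_product_space G ip.
Local Notation nrm f := (Num.sqrt (ip f f)).

Lemma ips_lincomb a b f g : G f -> G g -> G (fun s => a * f s + b * g s).
Proof. by move=> Gf Gg; apply: (ips_add HI); apply: (ips_scale HI). Qed.

Lemma ip_lincombl a b f g h : G f -> G g -> G h ->
  ip (fun s => a * f s + b * g s) h = a * ip f h + b * ip g h.
Proof.
move=> Gf Gg Gh; rewrite (ip_addl HI (ips_scale HI a Gf) (ips_scale HI b Gg) Gh).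
by rewrite !(ip_scalel HI).
Qed.

Lemma ip_lincombr a b f g h : G f -> G g -> G h ->
  ip h (fun s => a * f s + b * g s) = a * ip h f + b * ip h g.
Proof.
move=> Gf Gg Gh; rewrite (ip_sym HI Gh (ips_lincomb _ _ Gf Gg)) ip_lincombl //.
by rewrite !(ip_sym HI Gh).
Qed.

Lemma ip0l h : G h -> ip (fun _ => 0) h = 0.
Proof.
move=> Gh; have -> : (fun _ : R => 0 : R) = (fun s => 0 * h s).
  by apply: funext => s; rewrite mul0r.
by rewrite (ip_scalel HI) // mul0r.
Qed.

Lemma ip0r h : G h -> ip h (fun _ => 0) = 0.
Proof. by move=> Gh; rewrite (ip_sym HI Gh (ips_zero HI)) ip0l. Qed.

Lemma ip_lincomb_sq a b f g : G f -> G g ->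
  ip (fun s => a * f s + b * g s) (fun s => a * f s + b * g s) =
  a ^+ 2 * ip f f + 2 * a * b * ip f g + b ^+ 2 * ip g g.
Proof.
move=> Gf Gg; rewrite ip_lincombl ?ip_lincombr //; last exact: ips_lincomb.
rewrite (ip_sym HI Gg Gf); ring.
Qed.

Lemma sub_lincomb (f g : R -> R) : f \- g = (fun s => 1 * f s + (-1) * g s).
Proof. by apply: funext => s /=; rewrite mul1r mulN1r. Qed.

Lemma ips_sub f g : G f -> G g -> G (f \- g).
Proof. by move=> Gf Gg; rewrite sub_lincomb; apply: ips_lincomb. Qed.

Lemma cauchy_schwarz f g : G f -> G g -> `|ip f g| <= nrm f * nrm g.
Proof.
move=> Gf Gg; rewrite -sqrtrM ?(ip_ge0 HI) // -sqrtr_sqr ler_sqrt; last first.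
  by rewrite mulr_ge0 ?(ip_ge0 HI).
have [g0|gn0] := eqVneq (ip g g) 0.
  rewrite (ip_eq0 HI Gg g0) !ip0r ?expr2 ?mulr0 ?mul0r //; exact: ips_zero HI.
have gp : 0 < ip g g by rewrite lt0r gn0 (ip_ge0 HI).
set c := ip f g / ip g g.
have := ip_ge0 HI (ips_lincomb 1 (- c) Gf Gg).
rewrite ip_lincomb_sq // expr1n sqrrN !mul1r.
have -> : c ^+ 2 * ip g g = c * ip f g by rewrite /c; field; rewrite gn0.
move=> h; rewrite -subr_ge0; have -> : ip f f * ip g g - ip f g ^+ 2 =
  (ip f f - c * ip f g) * ip g g by rewrite /c; field; rewrite gn0.
by apply: mulr_ge0; [lra | exact: ltW].
Qed.

Lemma nrm_le_sub f g : G f -> G g -> nrm f <= nrm g + nrm (g \- f).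
Proof.
move=> Gf Gg; have Ggf := ips_sub Gg Gf; set d := g \- f in Ggf *.
have -> : f = (fun s => 1 * g s + (-1) * d s).
  by apply: funext => s /=; rewrite mul1r mulN1r opprB addrC subrK.
rewrite ip_lincomb_sq // -(ger0_norm (addr_ge0 (sqrtr_ge0 _) (sqrtr_ge0 _))).
rewrite -sqrtr_sqr ler_sqrt ?sqr_ge0 // sqrrD !sqr_sqrtr ?(ip_ge0 HI) //.
have := cauchy_schwarz Gg Ggf; have := ler_norm (- ip g d); rewrite normrN; lra.
Qed.

Lemma parallelogram f g : G f -> G g ->
  ip (f \- g) (f \- g) = 2 * ip f f + 2 * ip g g
    - 4 * ip (fun s => 2^-1 * f s + 2^-1 * g s) (fun s => 2^-1 * f s + 2^-1 * g s).
Proof. by move=> Gf Gg; rewrite sub_lincomb !ip_lincomb_sq //; field. Qed.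

End InnerProduct.

(* A linear term 2 lam a + lam^2 H that is nonnegative for every lam forces a = 0
   (take lam = - a / (H + 1)). *)
Lemma nonneg_quadratic_linear0 (R : realFieldType) (a H : R) : 0 <= H ->
  (forall lam, 0 <= 2 * lam * a + lam ^+ 2 * H) -> a = 0.
Proof.
move=> H0 hq; have H1 : 0 < H + 1 by lra.
have := hq (- a / (H + 1)).
have -> : 2 * (- a / (H + 1)) * a + (- a / (H + 1)) ^+ 2 * H =
    - (a ^+ 2 * (H + 2)) / (H + 1) ^+ 2 by field; lra.
rewrite mulNr oppr_ge0 pmulr_lle0 ?invr_gt0 ?exprn_gt0 // => ha.
have : a ^+ 2 <= 0 by rewrite -(pmulr_lle0 _ (_ : 0 < H + 2)) //; lra.
by rewrite expr2 => ha2; nra.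
Qed.

(* The representer
   is obtained from the element of minimal norm on the hyperplane L = 1. *)
Section Riesz.
Variables (R : realType) (G : set (R -> R)) (ip : (R -> R) -> (R -> R) -> R).
Hypotheses (HI : inner_product_space G ip) (Hcomplete : ips_complete G ip).
Local Notation nrm f := (Num.sqrt (ip f f)).
Variables (L : (R -> R) -> R) (C : R).
Hypothesis LD : forall f g, G f -> G g -> L (f \+ g) = L f + L g.
Hypothesis LZ : forall a f, G f -> L (fun s => a * f s) = a * L f.
Hypothesis LB : forall g, G g -> `|L g| <= C * nrm g.

Lemma L_lincomb a b f g : G f -> G g ->
  L (fun s => a * f s + b * g s) = a * L f + b * L g.
Proof.
by move=> Gf Gg; rewrite (LD (ips_scale HI a Gf) (ips_scale HI b Gg)) !LZ.
Qed.

Lemma L_zero : L (fun _ => 0) = 0.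
Proof.
have -> : (fun _ : R => 0 : R) = (fun s => 0 * (fun _ : R => 0 : R) s).
  by apply: funext => s; rewrite mul0r.
by rewrite LZ ?mul0r //; exact: ips_zero HI.
Qed.

Lemma hyperplane_closed (fs : nat -> R -> R) f :
  (forall n, G (fs n)) -> G f -> (forall n, L (fs n) = 1) ->
  (fun n => nrm (fs n \- f)) @ \oo --> 0 -> L f = 1.
Proof.
move=> Gfs Gf Lfs fs_f.
have : `|1 - L f| <= C * 0.
  apply: (ler_cvg_to (cvg_cst _) (cvgM (cvg_cst C) fs_f)); near=> n.
  rewrite -(Lfs n) /=; have -> : L (fs n) - L f = L (fs n \- f).
    by rewrite sub_lincomb L_lincomb // mul1r mulN1r.
  exact/LB/(ips_sub HI).
by rewrite mulr0 normr_le0 subr_eq0 => /eqP <-.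
Unshelve. all: end_near.
Qed.

Lemma limit_sq_norm_le (fs : nat -> R -> R) f d : 0 <= d ->
  (forall n, G (fs n)) -> G f -> (forall n, ip (fs n) (fs n) <= d + harmonic n) ->
  (fun n => nrm (fs n \- f)) @ \oo --> 0 -> ip f f <= d.
Proof.
move=> d0 Gfs Gf fs_le fs_f; rewrite -ler_sqrt //.
have sqrt_cvg : (fun n => Num.sqrt (d + harmonic n)) @ \oo --> Num.sqrt d.
  rewrite -[X in _ --> Num.sqrt X]addr0.
  exact: (continuous_cvg _ (@sqrt_continuous R _) (cvgD (cvg_cst d) cvg_harmonic)).
rewrite -[Num.sqrt d]addr0.
apply: (ler_cvg_to (cvg_cst _) (cvgD sqrt_cvg fs_f)); near=> n => /=.
apply: (le_trans (nrm_le_sub HI Gf (Gfs n))); rewrite lerD2r ler_sqrt //.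
by rewrite addr_ge0 // harmonic_ge0.
Unshelve. all: end_near.
Qed.

(* Approximate minimizers of the norm on the hyperplane L = 1 form a Cauchy
   sequence, by the parallelogram law applied to their midpoints. *)
Lemma near_minimizers_cauchy (fs : nat -> R -> R) d :
  (forall g, G g -> L g = 1 -> d <= ip g g) ->
  (forall n, G (fs n)) -> (forall n, L (fs n) = 1) ->
  (forall n, ip (fs n) (fs n) <= d + harmonic n) ->
  forall e, 0 < e -> exists N, forall m n, (N <= m)%N -> (N <= n)%N ->
    nrm (fs m \- fs n) < e.
Proof.
move=> d_le Gfs Lfs fs_le e e0.
have dist_le m n : ip (fs m \- fs n) (fs m \- fs n) <= 2 * harmonic m + 2 * harmonic n.
  rewrite (parallelogram HI (Gfs m) (Gfs n)).
  have := d_le _ (ips_lincomb HI 2^-1 2^-1 (Gfs m) (Gfs n)).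
  have half : 2^-1 * 1 + 2^-1 * 1 = 1 :> R by field.
  rewrite L_lincomb // !Lfs half => /(_ erefl).
  have := fs_le m; have := fs_le n; lra.
have e4 : 0 < e ^+ 2 / 4 by rewrite divr_gt0 ?exprn_gt0.
have [N _ harm_small] := (cvgr0Pnorm_lt _).1 (@cvg_harmonic R) _ e4.
exists N => m n mN nN; rewrite -(ger0_norm (ltW e0)) -sqrtr_sqr ltr_sqrt ?exprn_gt0 //.
apply: (le_lt_trans (dist_le m n)).
have := harm_small m mN; have := harm_small n nN.
rewrite !ger0_norm ?harmonic_ge0 //; lra.
Qed.

Lemma min_norm_exists w : G w -> L w = 1 ->
  exists f, [/\ G f, L f = 1 & forall g, G g -> L g = 1 -> ip f f <= ip g g].
Proof.
move=> Gw Lw.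
pose S := [set x | exists g, [/\ G g, L g = 1 & x = ip g g]].
have S_lb : has_lbound S by exists 0 => _ [g [Gg _ ->]]; apply: (ip_ge0 HI Gg).
have Sw : S (ip w w) by exists w.
have S_inf : has_inf S by split => //; exists (ip w w).
have d_le g : G g -> L g = 1 -> inf S <= ip g g.
  by move=> Gg Lg; apply: ge_inf => //; exists g.
have d0 : 0 <= inf S.
  by apply: lb_le_inf; [exists (ip w w) | move=> _ [g [Gg _ ->]]; apply: (ip_ge0 HI Gg)].
have near_min n : exists g, [/\ G g, L g = 1 & ip g g <= inf S + harmonic n].
  have [_ [g [Gg Lg ->]] lt_g] := inf_adherent (harmonic_gt0 n) S_inf.
  by exists g; split => //; exact: ltW.
have [fs fsP] := choice near_min.
have Gfs n : G (fs n) by case: (fsP n).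
have Lfs n : L (fs n) = 1 by case: (fsP n).
have fs_le n : ip (fs n) (fs n) <= inf S + harmonic n by case: (fsP n).
have [f [Gf fs_f]] := Hcomplete Gfs (near_minimizers_cauchy d_le Gfs Lfs fs_le).
have Lf := hyperplane_closed Gfs Gf Lfs fs_f.
exists f; split => // g Gg Lg.
exact: le_trans (limit_sq_norm_le d0 Gfs Gf fs_le fs_f) (d_le g Gg Lg).
Qed.

Lemma min_norm_orthogonal f h : G f -> L f = 1 ->
  (forall g, G g -> L g = 1 -> ip f f <= ip g g) ->
  G h -> L h = 0 -> ip f h = 0.
Proof.
move=> Gf Lf f_min Gh Lh; apply: (nonneg_quadratic_linear0 (ip_ge0 HI Gh)) => lam.
have := f_min _ (ips_lincomb HI 1 lam Gf Gh).
rewrite L_lincomb // Lf Lh mulr0 addr0 mulr1 (ip_lincomb_sq HI) // => /(_ erefl).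
rewrite expr1n !mul1r mulr1; lra.
Qed.

Theorem riesz_representation : exists r, G r /\ forall g, G g -> ip g r = L g.
Proof.
have [[w [Gw Lw_neq0]]|L_vanish] :=
    pselect (exists w, G w /\ L w != 0); last first.
  exists (fun _ => 0); split => [|g Gg]; first apply: (ips_zero HI).
  rewrite (ip0r HI Gg); have [//|Lg] := eqVneq (L g) 0.
  by case: L_vanish; exists g.
pose w1 := fun s => (L w)^-1 * w s.
have Gw1 : G w1 by apply: (ips_scale HI _ Gw).
have Lw1 : L w1 = 1 by rewrite LZ // mulVf.
have [f [Gf Lf f_min]] := min_norm_exists Gw1 Lw1.
have ff0 : 0 < ip f f.
  rewrite lt0r (ip_ge0 HI) // andbT; apply/eqP => /(ip_eq0 HI Gf) f0.
  by move: Lf; rewrite f0 L_zero => /esym/eqP; rewrite oner_eq0.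
exists (fun s => (ip f f)^-1 * f s); split => [|g Gg]; first apply: (ips_scale HI _ Gf).
have := min_norm_orthogonal Gf Lf f_min (ips_lincomb HI 1 (- L g) Gg Gf).
rewrite L_lincomb // Lf mulr1 mul1r subrr => /(_ erefl).
rewrite (ip_lincombr HI) // mul1r (ip_sym HI Gf Gg) mulNr => /eqP; rewrite subr_eq0 => /eqP fg.
rewrite (ip_sym HI Gg (ips_scale HI _ Gf)) (ip_scalel HI) // (ip_sym HI Gf Gg) fg.
by rewrite mulrCA mulVf ?mulr1 // gt_eqF.
Qed.

End Riesz.

Definition gram_matrix (R : realType) (ip : (R -> R) -> (R -> R) -> R) (n : nat)
    (r : 'I_n -> R -> R) : 'M[R]_n :=
  \matrix_(i, j) ip (r i) (r j).

(* Minimal-norm interpolation: given r_1, ..., r_n with invertible Gram matrix K,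
   the smallest squared norm of a g with <g, r_i> = x_i is x^T K^-1 x. *)
Section MinNormInterpolation.
Variables (R : realType) (G : set (R -> R)) (ip : (R -> R) -> (R -> R) -> R).
Hypothesis HI : inner_product_space G ip.
Variables (n : nat) (r : 'I_n -> R -> R).
Hypothesis Gr : forall i, G (r i).
Local Notation K := (gram_matrix ip r).
Hypothesis K_unit : K \in unitmx.

Definition span_elt (c : 'I_n -> R) : R -> R := fun s => \sum_(j < n) c j * r j s.

Lemma span_elt_seq (c : 'I_n -> R) (S : seq 'I_n) :
  G (fun s => \sum_(j <- S) c j * r j s) /\
  forall h, G h -> ip (fun s => \sum_(j <- S) c j * r j s) h =
                   \sum_(j <- S) c j * ip (r j) h.
Proof.
elim: S => [|a S [G_S ip_S]].
  have -> : (fun s => \sum_(j <- [::]) c j * r j s) = (fun _ => 0).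
    by apply: funext => s; rewrite big_nil.
  by split => [|h Gh]; [apply: (ips_zero HI) | rewrite (ip0l HI) // big_nil].
have -> : (fun s => \sum_(j <- a :: S) c j * r j s) =
    (fun s => c a * r a s + 1 * (fun s => \sum_(j <- S) c j * r j s) s).
  by apply: funext => s; rewrite big_cons mul1r.
split => [|h Gh]; first apply: (ips_lincomb HI _ _ (Gr a) G_S).
by rewrite (ip_lincombl HI) // ip_S // big_cons mul1r.
Qed.

Lemma G_span_elt c : G (span_elt c). Proof. exact: (span_elt_seq c _).1. Qed.

Lemma ip_span_elt c h : G h -> ip (span_elt c) h = \sum_(j < n) c j * ip (r j) h.
Proof. exact: (span_elt_seq c _).2. Qed.

Definition interpolant (x : 'cV[R]_n) : R -> R :=
  span_elt (fun j => (invmx K *m x) j 0).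

Lemma G_interpolant x : G (interpolant x). Proof. exact: G_span_elt. Qed.

Lemma interpolant_interp (x : 'cV[R]_n) i : ip (interpolant x) (r i) = x i 0.
Proof.
rewrite ip_span_elt // -[x in RHS](mulKVmx K_unit) !mxE.
by apply: eq_bigr => j _; rewrite [K i j]mxE (ip_sym HI (Gr j) (Gr i)) mulrC.
Qed.

Lemma ip_interpolant (x : 'cV[R]_n) h : G h -> (forall i, ip h (r i) = x i 0) ->
  ip (interpolant x) h = (x^T *m invmx K *m x) 0 0.
Proof.
move=> Gh h_interp; rewrite ip_span_elt // -mulmxA mxE.
by apply: eq_bigr => j _; rewrite (ip_sym HI (Gr j) Gh) h_interp !mxE mulrC.
Qed.

Lemma min_norm_interpolation g : G g ->
  ((\col_i ip g (r i))^T *m invmx K *m (\col_i ip g (r i))) 0 0 <= ip g g.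
Proof.
move=> Gg; set x := \col_i ip g (r i); set p := interpolant x.
have Gp : G p := G_interpolant x.
have pp : ip p p = (x^T *m invmx K *m x) 0 0.
  by apply: ip_interpolant => // i; exact: interpolant_interp.
have pg : ip p g = (x^T *m invmx K *m x) 0 0.
  by apply: ip_interpolant => // i; rewrite mxE.
have := ip_ge0 HI (ips_sub HI Gg Gp).
rewrite sub_lincomb (ip_lincomb_sq HI) // (ip_sym HI Gg Gp) pg pp.
rewrite expr1n sqrrN expr1n !mul1r; lra.
Qed.

End MinNormInterpolation.

Section Integrals.
Variable R : realType.
Local Notation leb := (@lebesgue_measure R).

Lemma continuous_integrable_itv (f : R -> R) (a b : R) :
  continuous f -> leb.-integrable `[a, b[ (EFin \o f).
Proof.
move=> f_cont; have f_int : leb.-integrable `[a, b] (EFin \o f).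
  apply: continuous_compact_integrable; first exact: segment_compact.
  exact: continuous_subspaceT.
apply: (integrableS _ _ _ f_int); [exact: measurable_itv | exact: measurable_itv |].
by apply: subset_itvl; rewrite bnd_simp.
Qed.

Lemma Rintegral_itv_ge_cst (f : R -> R) (a h c : R) : 0 < h -> continuous f ->
  (forall z, a <= z -> z < a + h -> c <= f z) ->
  c * h <= (\int[leb]_(z in `[a, a + h[) f z)%R.
Proof.
move=> h0 f_cont f_ge.
have c_cont : continuous (fun _ : R => c) by move=> z; exact: cvg_cst.
have c_int := continuous_integrable_itv a (a + h) c_cont.
have leb_itv : leb `[a, a + h[ = h%:E.
  by rewrite lebesgue_measure_itv /= lte_fin ltrDl h0 /= -EFinD addrAC subrr add0r.
rewrite -[c * h]/(c * fine h%:E) -leb_itv -Rintegral_cst; last exact: measurable_itv.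
apply: (le_Rintegral _ c_int (continuous_integrable_itv a (a + h) f_cont)).
  exact: measurable_itv.
by move=> z; rewrite /= in_itv /= => /andP[az zah]; exact: f_ge.
Qed.

Lemma gauss_continuous (m c : R) :
  continuous (fun z : R => expR (- ((z - m) ^+ 2) / c)).
Proof.
move=> z; have -> : (fun z : R => expR (- ((z - m) ^+ 2) / c)) =
    expR \o (fun z => - ((z - m) * (z - m)) / c).
  by apply: funext => y; rewrite /= expr2.
apply: continuous_comp; last exact: continuous_expR.
by apply: cvgM; last exact: cvg_cst; apply: cvgN; apply: cvgM; apply: cvgB; [exact: cvg_id | exact: cvg_cst
  | exact: cvg_id | exact: cvg_cst].
Qed.

Lemma gauss_int_gt0 (s2 m eta h : R) : 0 < s2 -> 0 < h -> 0 < gauss_int s2 m eta h.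
Proof.
move=> s0 h0; pose B := (`|eta - m| + h) ^+ 2.
have c0 : 0 < expR (- B / (2 * s2)) := expR_gt0 _.
apply: lt_le_trans (mulr_gt0 c0 h0) _; apply: Rintegral_itv_ge_cst => //.
  exact: gauss_continuous.
move=> z ez zeh; rewrite ler_expR !mulNr lerN2 ler_wpM2r ?invr_ge0 ?mulr_ge0 ?ltW //.
rewrite /B; have := ler_norm (eta - m); have := ler_norm (- (eta - m)).
rewrite normrN !expr2 => n1 n2; nra.
Qed.

Lemma convolD (u : R -> R) (t : R) f g :
  leb.-integrable `[0, +oo[ (fun tau => (f tau * u (t - tau))%:E) ->
  leb.-integrable `[0, +oo[ (fun tau => (g tau * u (t - tau))%:E) ->
  convol (f \+ g) u t = convol f u t + convol g u t.
Proof.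
move=> fi gi; rewrite /convol; under eq_Rintegral do rewrite /= mulrDl.
by rewrite RintegralD //; exact: measurable_itv.
Qed.

Lemma convolZ (u : R -> R) (t a : R) f :
  leb.-integrable `[0, +oo[ (fun tau => (f tau * u (t - tau))%:E) ->
  convol (fun s => a * f s) u t = a * convol f u t.
Proof.
move=> fi; rewrite /convol; under eq_Rintegral do rewrite -mulrA.
by rewrite RintegralZl //; exact: measurable_itv.
Qed.

End Integrals.

(* The representers r_a, r_b of g |-> (g * u)(a) and g |-> (g * u)(b) have inner
   product given by the kernel-matrix entry, by the reproducing property. *)
Lemma representer_gram (R : realType) (k : R -> R -> R) (G : set (R -> R))
    (ip : (R -> R) -> (R -> R) -> R) (u : R -> R) (a b : R) (ra rb : R -> R) :
  (forall s t, 0 <= s -> 0 <= t -> k s t = k t s) -> is_RKHS k G ip ->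
  (forall g, G g -> (@lebesgue_measure R).-integrable `[0, +oo[
     (fun tau => (g tau * u (a - tau))%:E)) ->
  G ra -> (forall g, G g -> ip g ra = convol g u a) ->
  (forall g, G g -> ip g rb = convol g u b) ->
  ip ra rb = kentry k u b a.
Proof.
move=> ksym HR a_int Gra ra_rep rb_rep.
rewrite rb_rep // /convol /kentry; apply: eq_Rintegral => xi.
rewrite inE /= in_itv /= andbT => xi0.
have [Gks ks_rep] := RKHS_reproducing HR xi0.
rewrite -(ks_rep ra Gra) (ip_sym (RKHS_inner_product HR) Gra Gks) ra_rep // /convol.
rewrite mulrC -RintegralZl; [| exact: measurable_itv | exact: a_int _ Gks].
apply: eq_Rintegral => tau; rewrite inE /= in_itv /= andbT => tau0.
by rewrite /ksec tau0 (ksym tau xi tau0 xi0) mulrCA mulrC.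
Qed.

(* log P(Y | x), up to the additive constant -N log sqrt(2 pi s2). *)
Definition log_likelihood (R : realType) (N M : nat) (s2 h : R) (eta : 'I_N -> R)
    (x : 'cV[R]_(N + M)) : R :=
  \sum_(i < N) ln (gauss_int s2 (x (lshift M i) 0) (eta i) h).

Lemma posterior_factor (R : realType) (N M : nat) (gamma s2 h : R) (eta : 'I_N -> R)
    (k : R -> R -> R) (u : R -> R) (t : 'I_(N + M) -> R) : 0 < s2 -> 0 < h ->
  exists2 P0 : R, 0 <= P0 & forall x, posterior gamma s2 h eta k u t x =
    P0 * expR (log_likelihood s2 h eta x
               - (x^T *m invmx (covx gamma k u t) *m x) 0 0 / 2).
Proof.
move=> s0 h0.
exists ((Num.sqrt (2 * pi * s2))^-1 ^+ N *
  ((Num.sqrt (2 * pi)) ^- (N + M) / Num.sqrt (\det (covx gamma k u t)))).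
  by rewrite !mulr_ge0 ?invr_ge0 ?exprn_ge0 ?invr_ge0 ?sqrtr_ge0.
move=> x; rewrite /posterior /likelihood /gauss_density /log_likelihood.
rewrite big_split /= prodr_const card_ord expRD expR_sum mulNr.
under [X in _ = _ * (X * _)]eq_bigr do rewrite lnK ?posrE ?gauss_int_gt0 //.
ring.
Qed.

Lemma convol_representers (R : realType) (k : R -> R -> R) (G : set (R -> R))
    (ip : (R -> R) -> (R -> R) -> R) (u : R -> R) (n : nat) (t : 'I_n -> R) :
  is_RKHS k G ip ->
  (forall i, exists C : R, forall g, G g ->
     (@lebesgue_measure R).-integrable `[0, +oo[ (fun tau => (g tau * u (t i - tau))%:E)
     /\ `|convol g u (t i)| <= C * Num.sqrt (ip g g)) ->
  exists r : 'I_n -> R -> R,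
    (forall i, G (r i)) /\ forall i g, G g -> ip g (r i) = convol g u (t i).
Proof.
move=> HR bounded.
have rep i : exists r, G r /\ forall g, G g -> ip g r = convol g u (t i).
  have [C HC] := bounded i.
  have conv_int g : G g -> (@lebesgue_measure R).-integrable `[0, +oo[
      (fun tau => (g tau * u (t i - tau))%:E) by move=> Gg; exact: (HC g Gg).1.
  apply: (riesz_representation (RKHS_inner_product HR) (RKHS_complete HR) (C := C)).
  - by move=> f g Gf Gg; exact: convolD (conv_int f Gf) (conv_int g Gg).
  - by move=> a f Gf; exact: convolZ (conv_int f Gf).
  - by move=> g Gg; exact: (HC g Gg).2.
have [r rP] := choice rep.
by exists r; split => [i | i]; case: (rP i).
Qed.

Lemma covx_gram (R : realType) (gamma : R) (k : R -> R -> R) (G : set (R -> R))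
    (ip : (R -> R) -> (R -> R) -> R) (u : R -> R) (n : nat) (t : 'I_n -> R)
    (r : 'I_n -> R -> R) :
  (forall s t, 0 <= s -> 0 <= t -> k s t = k t s) -> is_RKHS k G ip ->
  (forall i g, G g -> (@lebesgue_measure R).-integrable `[0, +oo[
     (fun tau => (g tau * u (t i - tau))%:E)) ->
  (forall i, G (r i)) -> (forall i g, G g -> ip g (r i) = convol g u (t i)) ->
  covx gamma k u t = gamma^-1 *: gram_matrix ip r.
Proof.
move=> ksym HR conv_int Gr r_rep.
rewrite /covx; congr (_ *: _); apply/matrixP => i j; rewrite !mxE.
rewrite -(representer_gram ksym HR (conv_int j) (Gr j) (r_rep j) (r_rep i)).
apply: (ip_sym (RKHS_inner_product HR) (Gr j) (Gr i)).
Qed.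

Lemma crit_data (R : realType) (Delta h gamma s2 : R) (N M : nat) (eta : 'I_N -> R)
    (u : R -> R) (ip : (R -> R) -> (R -> R) -> R) (t : 'I_(N + M) -> R) (g : R -> R) :
  (forall i : 'I_N, t (lshift M i) = i.+1%:R * Delta) ->
  crit Delta h gamma s2 eta u ip g =
    - 2 * log_likelihood s2 h eta (\col_(i < N + M) convol g u (t i)) + gamma * ip g g.
Proof.
move=> t_obs; rewrite /crit /log_likelihood; congr (_ * _ + _).
by apply: eq_bigr => i _; rewrite mxE t_obs.
Qed.

Theorem lemma1 (R : realType) (Delta h gamma s2 : R) (N M : nat)
  (eta : 'I_N -> R) (u : R -> R) (k : R -> R -> R)
  (G : set (R -> R)) (ip : (R -> R) -> (R -> R) -> R)
  (t : 'I_(N + M) -> R) (gb : R -> R) :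
  0 < Delta -> 0 < h -> 0 < gamma -> 0 < s2 ->
  (forall s, s < 0 -> u s = 0) ->
  pd_kernel k ->
  is_RKHS k G ip ->
  (forall i : 'I_N, t (lshift M i) = i.+1%:R * Delta) ->
  (forall i : 'I_(N + M), exists C : R, forall g, G g ->
     (@lebesgue_measure R).-integrable `[0, +oo[ (fun tau => (g tau * u (t i - tau))%:E)
     /\ `|convol g u (t i)| <= C * Num.sqrt (ip g g)) ->
  covx gamma k u t \in unitmx ->
  G gb ->
  (forall g, G g -> @crit R N Delta h gamma s2 eta u ip gb <= @crit R N Delta h gamma s2 eta u ip g) ->
  is_MAP (@posterior R N M gamma s2 h eta k u t) (\col_(i < N + M) convol gb u (t i)).
Proof.
move=> _ h0 gamma0 s0 _ [ksym _] HR t_obs bounded cov_unit Ggb gb_min.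
have HI := RKHS_inner_product HR.
have critE g := crit_data h gamma s2 eta u ip g t_obs.
have [r [Gr r_rep]] := convol_representers HR bounded.
have covxE : covx gamma k u t = gamma^-1 *: gram_matrix ip r.
  apply: covx_gram ksym HR _ Gr r_rep => i g Gg.
  by have [C HC] := bounded i; exact: (HC g Gg).1.
have K_unit : gram_matrix ip r \in unitmx.
  by rewrite -(unitmxZ _ (_ : gamma^-1 \is a GRing.unit)) -?covxE // unitfE invr_eq0 gt_eqF.
pose q (x : 'cV[R]_(N + M)) := (x^T *m invmx (gram_matrix ip r) *m x) 0 0.
have quadE x : (x^T *m invmx (covx gamma k u t) *m x) 0 0 = gamma * q x.
  by rewrite covxE invmxZ -?covxE // invrK -scalemxAr -scalemxAl mxE.
(* The posterior is a monotone image of -J(x) = log P(Y | x) - gamma q(x) / 2. *)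
have [P0 P0_ge0 postE] := @posterior_factor R N M gamma s2 h eta k u t s0 h0.
move=> x; rewrite !postE; apply: ler_wpM2l => //; rewrite ler_expR !quadE.
(* The interpolant of x attains J(x) in the criterion ... *)
have Ggx := G_interpolant HI Gr x.
have crit_gx : crit Delta h gamma s2 eta u ip (interpolant ip r x) =
    - 2 * log_likelihood s2 h eta x + gamma * q x.
  have data_gx : \col_(i < N + M) convol (interpolant ip r x) u (t i) = x.
    by apply/matrixP => i j; rewrite !ord1 mxE -r_rep // (interpolant_interp HI Gr K_unit).
  rewrite critE data_gx (ip_interpolant HI Gr Ggx) // => i.
  exact: (interpolant_interp HI Gr K_unit).
(* ... while the criterion at gb dominates J at its own data. *)
have crit_gb : - 2 * log_likelihood s2 h eta (\col_(i < N + M) convol gb u (t i))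
    + gamma * q (\col_(i < N + M) convol gb u (t i)) <= crit Delta h gamma s2 eta u ip gb.
  rewrite critE lerD2l; apply: ler_wpM2l; first exact: ltW.
  have -> : \col_(i < N + M) convol gb u (t i) = \col_i ip gb (r i).
    by apply/matrixP => i j; rewrite !mxE r_rep.
  exact: (min_norm_interpolation HI Gr K_unit Ggb).
have := gb_min _ Ggx; rewrite crit_gx; lra.
Qed.
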